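(* Fix the model parameters $\tau_{DA},L_P,L_U,p_P^i,p_U^i,c_P,c_I,\xi_{\rm cov},ded,Cov_{\max},D_{\max}$ and a population size vector $\mathbf m$ as in the context, and suppose Assumption (A) holds. (i) Let $K_1,K_2\in\mathbb N$ with $K_1\le K_2$ and $\beta_{IA}\in(0,1]$. If $\mathbf x^1$ is any Nash equilibrium of the population game with parameters $(K_1,\beta_{IA})$ and $\mathbf x^2$ is any Nash equilibrium of the population game with parameters $(K_2,\beta_{IA})$, then $\sum_{d\in\mathcal D}x^1_{d,P}\le\sum_{d\in\mathcal D}x^2_{d,P}$. (ii) Let $K\in\mathbb N$ and $0<\beta^1_{IA}\le\beta^2_{IA}\le 1$. If $\mathbf x^1$ is any Nash equilibrium of the game with parameters $(K,\beta^1_{IA})$ and $\mathbf x^2$ is any Nash equilibrium of the game with parameters $(K,\beta^2_{IA})$, then $\sum_{d\in\mathcal D}x^1_{d,P}\le\sum_{d\in\mathcal D}x^2_{d,P}$.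
   Context: Population game model. Let $D_{\max}\in\mathbb N$, $\mathcal D=\{1,\dots,D_{\max}\}$ (population $d$ = nodes of degree $d$), and action set $\mathcal A=\{I,N,P\}$ (insurance, no action, protection). A population size vector is $\mathbf m=(m_d)_{d\in\mathcal D}$ with $m_d>0$ and $\sum_d m_d=1$. A social state is $\mathbf x=(x_{d,a})_{d\in\mathcal D,a\in\mathcal A}$ with $x_{d,a}\ge0$ and $\sum_{a}x_{d,a}=m_d$; $\mathcal X$ is the set of social states. Parameters: $\tau_{DA}\in(0,1]$; $0\le L_P<L_U$, $\Delta L=L_U-L_P$; $0\le p_P^i<p_U^i\le1$, $\Delta p=p_U^i-p_P^i$; $\beta_{IA}\in(0,1]$; $K\in\mathbb N$; costs $c_P,c_I\ge0$; $\xi_{\rm cov}\in(0,1]$, $ded\ge0$, $Cov_{\max}\ge0$. Define $w_d=d\,m_d/\sum_{d'}d'm_{d'}$, $d_{\rm avg}=\sum_d d\,m_d$, $g_{d,a}=x_{d,a}/m_d$, $g_{d,U}=g_{d,N}+g_{d,I}$, and $\gamma(\mathbf x)=\beta_{IA}\sum_{d}w_d(g_{d,P}p_P^i+g_{d,U}p_U^i)$, $\lambda(\mathbf x)=\beta_{IA}\sum_d w_d(d-1)(g_{d,P}p_P^i+g_{d,U}p_U^i)$, and the exposure $e(\mathbf x)=\gamma(\mathbf x)\sum_{k=1}^K\lambda(\mathbf x)^{k-1}$. Costs: $C_{d,P}(\mathbf x)=\tau_{DA}(1+d\,e(\mathbf x))L_P+c_P$, $C_{d,N}(\mathbf x)=\tau_{DA}(1+d\,e(\mathbf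 x))L_U$, $C_{d,I}(\mathbf x)=C_{d,N}(\mathbf x)+c_I-Ins(\mathbf x,d)$ where $Ins(\mathbf x,d)=\min\big(Cov_{\max},\ \xi_{\rm cov}\max(0,C_{d,N}(\mathbf x)-ded)\big)$. A social state $\mathbf x^\star$ is a Nash equilibrium if for all $d\in\mathcal D$, $a\in\mathcal A$: $x^\star_{d,a}>0$ implies $C_{d,a}(\mathbf x^\star)=\min_{a'\in\mathcal A}C_{d,a'}(\mathbf x^\star)$. Assumption (A): $L_P<(1-\xi_{\rm cov})L_U$ and $c_P>c_I+ded$. *)

From mathcomp Require Import all_boot all_order all_algebra.
From mathcomp Require Import reals.
Set Implicit Arguments. Unset Strict Implicit. Unset Printing Implicit Defensive.
Import Order.TTheory GRing.Theory Num.Theory.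
Local Open Scope ring_scope.

(* Actions: insurance, no action, protection. *)
Inductive action := aI | aN | aP.

Record params (R : realType) := Params {
  tauDA : R; LP : R; LU : R; pP : R; pU : R;
  cP : R; cI : R; xi : R; ded : R; Covmax : R }.

Section Model.
Variables (R : realType) (Dmax : nat) (pr : params R) (m : 'I_Dmax -> R).

Definition valid_params : Prop :=
  (0 < tauDA pr <= 1) /\ (0 <= LP pr < LU pr) /\ (0 <= pP pr < pU pr) /\ (pU pr <= 1) /\
  (0 <= cP pr) /\ (0 <= cI pr) /\ (0 < xi pr <= 1) /\
  (0 <= ded pr) /\ (0 <= Covmax pr).

Definition assumptionA : Prop :=
  LP pr < (1 - xi pr) * LU pr /\ cI pr + ded pr < cP pr.

(* Population d (index i : 'I_Dmax) consists of nodes of degree d = i+1. *)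
Definition deg (i : 'I_Dmax) : R := (i.+1)%:R.

Definition pop_size_vector : Prop :=
  (forall d, 0 < m d) /\ \sum_(d < Dmax) m d = 1.

Definition social_state (x : 'I_Dmax -> action -> R) : Prop :=
  forall d, [/\ 0 <= x d aI, 0 <= x d aN, 0 <= x d aP & x d aI + x d aN + x d aP = m d].

Definition wgt (d : 'I_Dmax) : R :=
  deg d * m d / \sum_(d' < Dmax) deg d' * m d'.

Definition gfrac (x : 'I_Dmax -> action -> R) d a : R := x d a / m d.
Definition gU (x : 'I_Dmax -> action -> R) d : R := gfrac x d aN + gfrac x d aI.

Variables (K : nat) (beta : R).

Definition risk x d : R := gfrac x d aP * pP pr + gU x d * pU pr.

Definition gamma x : R := beta * \sum_(d < Dmax) wgt d * risk x d.
Definition lambda x : R := beta * \sum_(d < Dmax) wgt d * (deg d - 1) * risk x d.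

Definition exposure x : R := gamma x * \sum_(1 <= k < K.+1) lambda x ^+ (k.-1).

Definition costN x d : R := tauDA pr * (1 + deg d * exposure x) * LU pr.
Definition costP x d : R := tauDA pr * (1 + deg d * exposure x) * LP pr + cP pr.
Definition Ins x d : R :=
  Num.min (Covmax pr) (xi pr * Num.max 0 (costN x d - ded pr)).
Definition costI x d : R := costN x d + cI pr - Ins x d.

Definition cost x d (a : action) : R :=
  match a with aI => costI x d | aN => costN x d | aP => costP x d end.

Definition min_cost x d : R :=
  Num.min (cost x d aI) (Num.min (cost x d aN) (cost x d aP)).

Definition nash_eq (x : 'I_Dmax -> action -> R) : Prop :=
  social_state x /\
  forall d a, 0 < x d a -> cost x d a = min_cost x d.

End Model.

Definition total_P (R : realType) (Dmax : nat) (x : 'I_Dmax -> action -> R) : R :=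
  \sum_(d < Dmax) x d aP.

From mathcomp Require Import all_boot all_order all_algebra.
From mathcomp Require Import reals.
From mathcomp Require Import ring lra.
Set Implicit Arguments. Unset Strict Implicit. Unset Printing Implicit Defensive.
Import Order.TTheory GRing.Theory Num.Theory.
Local Open Scope ring_scope.

(* Every cost is a function of the loss level a = tau (1 + d e) of the
   population, and under Assumption (A) the advantage of insurance and of no
   action over protection is strictly increasing in a.  Hence protection obeys
   a threshold rule: a population that protects at some level is fully
   protected at every higher level, in the same or in any other equilibrium.
   If x1 and x2 are equilibria for (K1, b1) <= (K2, b2) with exposures e1 and
   e2, then e1 < e2 gives x1_P <= x2_P degree by degree.  The case e2 < e1
   is impossible: it gives x2_P <= x1_P pointwise, and the exposure is
   antitone in protection and monotone in (K, b), so e1 <= e2.  When e1 = e2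
   = 0 everybody protects; when e1 = e2 > 0 the level increases with the
   degree, so the threshold rule forbids the two protection profiles to cross,
   and the exposure would be strictly larger at the less protected one. *)

Lemma geom_sum_ge1 (R : numDomainType) (K : nat) (l : R) :
  (1 <= K)%N -> 0 <= l -> 1 <= \sum_(1 <= k < K.+1) l ^+ k.-1.
Proof.
move=> K_ge1 l_ge0; rewrite big_ltn // expr0 lerDl.
by apply: sumr_ge0 => k _; apply: exprn_ge0.
Qed.

Lemma geom_sum_le (R : numDomainType) (K1 K2 : nat) (l1 l2 : R) :
  (K1 <= K2)%N -> 0 <= l1 -> l1 <= l2 ->
  \sum_(1 <= k < K1.+1) l1 ^+ k.-1 <= \sum_(1 <= k < K2.+1) l2 ^+ k.-1.
Proof.
move=> leK l1_ge0 lel; have l2_ge0 := le_trans l1_ge0 lel.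
rewrite (@big_cat_nat _ _ _ K1.+1 1 K2.+1) //= -[leLHS]addr0; apply: lerD.
  by apply: ler_sum => k _; apply: lerXn2r; rewrite ?nnegrE.
by apply: sumr_ge0 => k _; apply: exprn_ge0.
Qed.

Lemma min_max0_sub_le (R : realDomainType) (C c z z' : R) :
  0 <= c -> z <= z' ->
  Num.min C (c * Num.max 0 z') - Num.min C (c * Num.max 0 z) <= c * (z' - z).
Proof.
move=> c_ge0 lez.
have [le_max0 max0_lip] : Num.max 0 z <= Num.max 0 z' /\
    Num.max 0 z' - Num.max 0 z <= z' - z.
  by rewrite !maxEle; case: (leP 0 z); case: (leP 0 z') => *; split; lra.
have := ler_wpM2l c_ge0 le_max0; have := ler_wpM2l c_ge0 max0_lip.
rewrite mulrBr; move: (c * _ z) (c * _ z') => u u'.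
by rewrite !minEle; case: (leP C u); case: (leP C u') => *; lra.
Qed.

Lemma exists_lt_of_sum_lt (R : realDomainType) (n : nat) (F G : 'I_n -> R) :
  \sum_(i < n) F i < \sum_(i < n) G i -> exists i, F i < G i.
Proof.
move=> ltFG; apply/existsP; apply: contraLR ltFG; rewrite negb_exists -leNgt.
by move=> /forallP geGF; apply: ler_sum => i _; rewrite leNgt geGF.
Qed.

Section Equilibria.

Variables (R : realType) (Dmax : nat) (pr : params R) (m : 'I_Dmax -> R).
Hypotheses (pr_valid : valid_params pr) (m_pop : pop_size_vector m)
  (prA : assumptionA pr).

Let tau_gt0 : 0 < tauDA pr.
Proof. by case: pr_valid => /andP[]. Qed.

Let LP_ge0 : 0 <= LP pr.
Proof. by case: pr_valid => _ [/andP[]]. Qed.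

Let LP_lt_LU : LP pr < LU pr.
Proof. by case: pr_valid => _ [/andP[]]. Qed.

Let pP_ge0 : 0 <= pP pr.
Proof. by case: pr_valid => _ [_ [/andP[]]]. Qed.

Let pP_lt_pU : pP pr < pU pr.
Proof. by case: pr_valid => _ [_ [/andP[]]]. Qed.

Let xi_ge0 : 0 <= xi pr.
Proof. by case: pr_valid => _ [_ [_ [_ [_ [_ [/andP[/ltW]]]]]]]. Qed.

Let m_gt0 d : 0 < m d.
Proof. by case: m_pop. Qed.

Definition cost_at (a : R) (act : action) : R :=
  match act with
  | aI => a * LU pr + cI pr
          - Num.min (Covmax pr) (xi pr * Num.max 0 (a * LU pr - ded pr))
  | aN => a * LU pr
  | aP => a * LP pr + cP pr
  end.

Lemma advantage_over_protection_lt (a a' : R) (act : action) :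
  a < a' -> act <> aP ->
  cost_at a act - cost_at a aP < cost_at a' act - cost_at a' aP.
Proof.
move=> lta nP; have [ltA _] := prA.
have gain_LU : 0 < (a' - a) * (LU pr - LP pr) by rewrite mulr_gt0 ?subr_gt0.
case: act nP => [_ | _ | /(_ erefl)//] /=; last by lra.
have gain_xi : 0 < (a' - a) * ((1 - xi pr) * LU pr - LP pr).
  by rewrite mulr_gt0 ?subr_gt0.
have lez : a * LU pr - ded pr <= a' * LU pr - ded pr.
  by rewrite lerD2r ler_wpM2r // ltW // (le_lt_trans LP_ge0).
have := min_max0_sub_le (Covmax pr) xi_ge0 lez.
have -> : a' * LU pr - ded pr - (a * LU pr - ded pr) = (a' - a) * LU pr by ring.
by lra.
Qed.

Lemma protection_strictly_best (a a' : R) (act : action) :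
  a < a' -> act <> aP -> cost_at a aP <= cost_at a act ->
  cost_at a' aP < cost_at a' act.
Proof. by move=> lta nP; have := advantage_over_protection_lt lta nP; lra. Qed.

Definition level (K : nat) (beta : R) x (d : 'I_Dmax) : R :=
  tauDA pr * (1 + deg R d * exposure pr m K beta x).

Lemma costE K beta x d act :
  cost pr m K beta x d act = cost_at (level K beta x d) act.
Proof. by case: act. Qed.

Lemma deg_gt0 (d : 'I_Dmax) : 0 < deg R d.
Proof. by rewrite /deg ltr0n. Qed.

Lemma level_lt K1 K2 b1 b2 x1 x2 d :
  exposure pr m K1 b1 x1 < exposure pr m K2 b2 x2 ->
  level K1 b1 x1 d < level K2 b2 x2 d.
Proof. by move=> lte; rewrite ltr_pM2l // ltrD2l ltr_pM2l // deg_gt0. Qed.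

Lemma level_lt_deg K beta x (d d' : 'I_Dmax) :
  0 < exposure pr m K beta x -> (d < d')%N ->
  level K beta x d < level K beta x d'.
Proof. by move=> e_gt0 ltd; rewrite ltr_pM2l // ltrD2l ltr_pM2r // ltr_nat. Qed.

Lemma min_cost_le K beta x d act :
  min_cost pr m K beta x d <= cost pr m K beta x d act.
Proof. by case: act; rewrite /min_cost !ge_min lexx ?orbT. Qed.

Lemma nash_protection_best K beta x d act :
  nash_eq pr m K beta x -> 0 < x d aP ->
  cost pr m K beta x d aP <= cost pr m K beta x d act.
Proof. by move=> [_ nash] xP_gt0; rewrite nash // min_cost_le. Qed.

Lemma nash_full_protection K beta x d :
  nash_eq pr m K beta x ->
  (forall act, act <> aP -> cost pr m K beta x d aP < cost pr m K beta x d act) ->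
  x d aP = m d.
Proof.
move=> [state nash] Pbest.
have abandoned act : act <> aP -> x d act <= 0.
  move=> nP; rewrite leNgt; apply/negP => x_gt0.
  by move: (Pbest _ nP); rewrite (nash d act) // ltNge min_cost_le.
have xI_le0 : x d aI <= 0 by apply: abandoned.
have xN_le0 : x d aN <= 0 by apply: abandoned.
by have [? ? ? ?] := state d; lra.
Qed.

Lemma nash_protection_threshold K1 K2 b1 b2 x1 x2 d d' :
  nash_eq pr m K1 b1 x1 -> nash_eq pr m K2 b2 x2 ->
  0 < x1 d aP -> level K1 b1 x1 d < level K2 b2 x2 d' -> x2 d' aP = m d'.
Proof.
move=> nash1 nash2 x1_gt0 ltl; apply: nash_full_protection nash2 _ => act nP.
rewrite !costE; apply: protection_strictly_best ltl nP _.
by rewrite -!costE nash_protection_best.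
Qed.

Lemma xP_bounds x d : social_state m x -> 0 <= x d aP <= m d.
Proof. by move=> /(_ d) [? ? ? ?]; apply/andP; split; lra. Qed.

Lemma riskE x d : social_state m x ->
  risk pr m x d = pU pr - (pU pr - pP pr) * (x d aP / m d).
Proof.
move=> /(_ d) [_ _ _ sum_m]; have m_neq0 := lt0r_neq0 (m_gt0 d).
rewrite /risk /gU /gfrac; have -> : x d aI = m d - x d aN - x d aP by lra.
by field.
Qed.

Lemma risk_le x1 x2 d : social_state m x1 -> social_state m x2 ->
  x2 d aP <= x1 d aP -> risk pr m x1 d <= risk pr m x2 d.
Proof.
move=> s1 s2 lex; rewrite !riskE // lerD2l lerN2.
apply: ler_wpM2l; first by rewrite subr_ge0 ltW.
by rewrite ler_pM2r ?invr_gt0.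
Qed.

Lemma risk_lt x1 x2 d : social_state m x1 -> social_state m x2 ->
  x2 d aP < x1 d aP -> risk pr m x1 d < risk pr m x2 d.
Proof.
move=> s1 s2 ltx; rewrite !riskE // ltrD2l ltrN2 ltr_pM2l ?subr_gt0 //.
by rewrite ltr_pM2r ?invr_gt0.
Qed.

Lemma risk_gt0 x d : social_state m x -> x d aP < m d -> 0 < risk pr m x d.
Proof.
move=> s ltm; rewrite riskE //.
have : (pU pr - pP pr) * (x d aP / m d) < pU pr - pP pr.
  by rewrite gtr_pMr ?subr_gt0 // ltr_pdivrMr // mul1r.
by have := pP_ge0; lra.
Qed.

Lemma risk_ge0 x d : social_state m x -> 0 <= risk pr m x d.
Proof.
move=> s; have /andP[_] := xP_bounds d s; rewrite le_eqVlt => /predU1P[eqm|].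
  by rewrite riskE // eqm divff ?lt0r_neq0 // mulr1 subKr.
by move/(risk_gt0 s)/ltW.
Qed.

Lemma wgt_gt0 d : 0 < wgt m d.
Proof.
have dm_gt0 d' : 0 < deg R d' * m d' by rewrite mulr_gt0 ?deg_gt0.
rewrite /wgt divr_gt0 // (bigD1 d) //=; apply: ltr_pwDl => //.
by apply: sumr_ge0 => d' _; rewrite ltW.
Qed.

Section WeightedRisk.

Variable F : 'I_Dmax -> R.
Hypothesis F_ge0 : forall d, 0 <= F d.

Lemma weighted_risk_ge0 x : social_state m x ->
  0 <= \sum_(d < Dmax) F d * risk pr m x d.
Proof. by move=> s; apply: sumr_ge0 => d _; rewrite mulr_ge0 ?risk_ge0. Qed.

Lemma weighted_risk_le x1 x2 : social_state m x1 -> social_state m x2 ->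
  (forall d, x2 d aP <= x1 d aP) ->
  \sum_(d < Dmax) F d * risk pr m x1 d <= \sum_(d < Dmax) F d * risk pr m x2 d.
Proof. by move=> s1 s2 lex; apply: ler_sum => d _; rewrite ler_wpM2l ?risk_le. Qed.

Lemma weighted_risk_lt x1 x2 d0 : 0 < F d0 ->
  social_state m x1 -> social_state m x2 ->
  (forall d, x2 d aP <= x1 d aP) -> x2 d0 aP < x1 d0 aP ->
  \sum_(d < Dmax) F d * risk pr m x1 d < \sum_(d < Dmax) F d * risk pr m x2 d.
Proof.
move=> F_gt0 s1 s2 lex ltx0; rewrite (bigD1 d0) // [ltRHS](bigD1 d0) //=.
rewrite ltr_leD ?ltr_pM2l ?risk_lt //.
by apply: ler_sum => d _; rewrite ler_wpM2l ?risk_le.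
Qed.

End WeightedRisk.

Let wgt_ge0 d : 0 <= wgt m d.
Proof. exact/ltW/wgt_gt0. Qed.

Let wgt_deg_ge0 d : 0 <= wgt m d * (deg R d - 1).
Proof. by rewrite mulr_ge0 // subr_ge0 /deg ler1n. Qed.

Lemma gamma_ge0 beta x : 0 <= beta -> social_state m x ->
  0 <= gamma pr m beta x.
Proof. by move=> b_ge0 s; rewrite mulr_ge0 ?weighted_risk_ge0. Qed.

Lemma lambda_ge0 beta x : 0 <= beta -> social_state m x ->
  0 <= lambda pr m beta x.
Proof. by move=> b_ge0 s; rewrite mulr_ge0 ?weighted_risk_ge0. Qed.

Lemma gamma_le b1 b2 x1 x2 : 0 <= b1 -> b1 <= b2 ->
  social_state m x1 -> social_state m x2 -> (forall d, x2 d aP <= x1 d aP) ->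
  gamma pr m b1 x1 <= gamma pr m b2 x2.
Proof.
move=> b1_ge0 leb s1 s2 lex.
by apply: ler_pM => //; [apply: weighted_risk_ge0 | apply: weighted_risk_le].
Qed.

Lemma lambda_le b1 b2 x1 x2 : 0 <= b1 -> b1 <= b2 ->
  social_state m x1 -> social_state m x2 -> (forall d, x2 d aP <= x1 d aP) ->
  lambda pr m b1 x1 <= lambda pr m b2 x2.
Proof.
move=> b1_ge0 leb s1 s2 lex.
by apply: ler_pM => //; [apply: weighted_risk_ge0 | apply: weighted_risk_le].
Qed.

Lemma exposure_le K1 K2 b1 b2 x1 x2 :
  (K1 <= K2)%N -> 0 <= b1 -> b1 <= b2 ->
  social_state m x1 -> social_state m x2 -> (forall d, x2 d aP <= x1 d aP) ->
  exposure pr m K1 b1 x1 <= exposure pr m K2 b2 x2.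
Proof.
move=> leK b1_ge0 leb s1 s2 lex; have l1_ge0 := lambda_ge0 b1_ge0 s1.
apply: ler_pM; first exact: gamma_ge0.
- by apply: sumr_ge0 => k _; apply: exprn_ge0.
- exact: gamma_le.
- exact: geom_sum_le leK l1_ge0 (lambda_le b1_ge0 leb s1 s2 lex).
Qed.

Lemma exposure_lt K1 K2 b1 b2 x1 x2 d0 :
  (1 <= K1)%N -> (K1 <= K2)%N -> 0 < b1 -> b1 <= b2 ->
  social_state m x1 -> social_state m x2 -> (forall d, x2 d aP <= x1 d aP) ->
  x2 d0 aP < x1 d0 aP ->
  exposure pr m K1 b1 x1 < exposure pr m K2 b2 x2.
Proof.
move=> K1_ge1 leK b1_gt0 leb s1 s2 lex ltx0.
have b1_ge0 := ltW b1_gt0; have l1_ge0 := lambda_ge0 b1_ge0 s1.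
have lt_gamma : gamma pr m b1 x1 < gamma pr m b2 x2.
  apply: (@lt_le_trans _ _ (b1 * \sum_(d < Dmax) wgt m d * risk pr m x2 d)).
    by rewrite ltr_pM2l // (weighted_risk_lt wgt_ge0 (wgt_gt0 d0)).
  by rewrite ler_wpM2r // weighted_risk_ge0.
apply: (@lt_le_trans _ _ (gamma pr m b2 x2 *
  \sum_(1 <= k < K1.+1) lambda pr m b1 x1 ^+ k.-1)).
  by rewrite ltr_pM2r // (lt_le_trans ltr01) ?geom_sum_ge1.
apply: ler_wpM2l; first exact: gamma_ge0 (le_trans b1_ge0 leb) s2.
exact: geom_sum_le leK l1_ge0 (lambda_le b1_ge0 leb s1 s2 lex).
Qed.

Lemma exposure_le0_full_protection K beta x d :
  (1 <= K)%N -> 0 < beta -> social_state m x ->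
  exposure pr m K beta x <= 0 -> x d aP = m d.
Proof.
move=> K_ge1 b_gt0 s; apply: contraTeq => neq_m; rewrite -ltNge.
have ltm : x d aP < m d by rewrite lt_neqAle neq_m; have /andP[] := xP_bounds d s.
have gamma_gt0 : 0 < gamma pr m beta x.
  rewrite /gamma mulr_gt0 // (bigD1 d) //=; apply: ltr_pwDl.
    by rewrite mulr_gt0 ?wgt_gt0 ?risk_gt0.
  by apply: sumr_ge0 => d' _; rewrite mulr_ge0 ?wgt_ge0 ?risk_ge0.
rewrite /exposure mulr_gt0 // (lt_le_trans ltr01) // geom_sum_ge1 //.
exact: lambda_ge0 (ltW b_gt0) s.
Qed.

Lemma nash_no_crossing K1 K2 b1 b2 x1 x2 d d' :
  nash_eq pr m K1 b1 x1 -> nash_eq pr m K2 b2 x2 ->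
  0 < exposure pr m K1 b1 x1 -> 0 < exposure pr m K2 b2 x2 ->
  x1 d aP < x2 d aP -> x2 d' aP < x1 d' aP -> False.
Proof.
move=> nash1 nash2 e1_gt0 e2_gt0 ltd ltd'.
have [/andP[x1d_ge0 _] /andP[_ x2d_le]] := (xP_bounds d nash1.1, xP_bounds d nash2.1).
have [/andP[_ x1d'_le] /andP[x2d'_ge0 _]] :=
  (xP_bounds d' nash1.1, xP_bounds d' nash2.1).
case: (ltngtP d d') => [ltdd' | ltd'd | /val_inj eqd].
- have x2d_gt0 : 0 < x2 d aP by apply: le_lt_trans ltd.
  have := nash_protection_threshold nash2 nash2 x2d_gt0 (level_lt_deg e2_gt0 ltdd').
  by lra.
- have x1d'_gt0 : 0 < x1 d' aP by apply: le_lt_trans ltd'.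
  have := nash_protection_threshold nash1 nash1 x1d'_gt0 (level_lt_deg e1_gt0 ltd'd).
  by lra.
- by move: ltd'; rewrite -eqd; lra.
Qed.

Lemma nash_protection_le_of_exposure_lt K1 K2 b1 b2 x1 x2 d :
  nash_eq pr m K1 b1 x1 -> nash_eq pr m K2 b2 x2 ->
  exposure pr m K1 b1 x1 < exposure pr m K2 b2 x2 -> x1 d aP <= x2 d aP.
Proof.
move=> nash1 nash2 lte; have /andP[_ x1_le] := xP_bounds d nash1.1.
have [x1_gt0 | x1_le0] := ltP 0 (x1 d aP).
  by rewrite (nash_protection_threshold nash1 nash2 x1_gt0 (level_lt d lte)).
by case/andP: (xP_bounds d nash2.1) => x2_ge0 _; apply: le_trans x1_le0 x2_ge0.
Qed.

Lemma nash_total_protection_le K1 K2 b1 b2 x1 x2 :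
  (1 <= K1)%N -> (K1 <= K2)%N -> 0 < b1 -> b1 <= b2 ->
  nash_eq pr m K1 b1 x1 -> nash_eq pr m K2 b2 x2 -> total_P x1 <= total_P x2.
Proof.
move=> K1_ge1 leK b1_gt0 leb nash1 nash2; have [s1 s2] := (nash1.1, nash2.1).
have b2_gt0 := lt_le_trans b1_gt0 leb; have K2_ge1 := leq_trans K1_ge1 leK.
case: (ltgtP (exposure pr m K1 b1 x1) (exposure pr m K2 b2 x2)) => [lte|gte|eqe].
- by apply: ler_sum => d _; apply: nash_protection_le_of_exposure_lt lte.
- have lex d : x2 d aP <= x1 d aP by apply: nash_protection_le_of_exposure_lt gte.
  by move: gte; rewrite ltNge exposure_le // ltW.
have [e_le0 | e_gt0] := leP (exposure pr m K1 b1 x1) 0.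
  apply: ler_sum => d _.
  rewrite (exposure_le0_full_protection d K1_ge1 b1_gt0 s1 e_le0).
  by rewrite (exposure_le0_full_protection d K2_ge1 b2_gt0 s2) // -eqe.
rewrite leNgt; apply/negP => /exists_lt_of_sum_lt [d0 ltx0].
have lex d : x2 d aP <= x1 d aP.
  rewrite leNgt; apply/negP => ltd.
  by apply: (nash_no_crossing nash1 nash2 e_gt0 _ ltd ltx0); rewrite -eqe.
by move: (exposure_lt K1_ge1 leK b1_gt0 leb s1 s2 lex ltx0); rewrite eqe ltxx.
Qed.

End Equilibria.

Theorem theorem3 (R : realType) (Dmax : nat) (pr : params R) (m : 'I_Dmax -> R) :
  valid_params pr -> pop_size_vector m -> assumptionA pr ->
  (forall (K1 K2 : nat) (beta : R),
     (1 <= K1)%N -> (K1 <= K2)%N -> 0 < beta <= 1 ->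
     forall x1 x2 : 'I_Dmax -> action -> R,
       nash_eq pr m K1 beta x1 -> nash_eq pr m K2 beta x2 ->
       total_P x1 <= total_P x2) /\
  (forall (K : nat) (beta1 beta2 : R),
     (1 <= K)%N -> 0 < beta1 -> beta1 <= beta2 -> beta2 <= 1 ->
     forall x1 x2 : 'I_Dmax -> action -> R,
       nash_eq pr m K beta1 x1 -> nash_eq pr m K beta2 x2 ->
       total_P x1 <= total_P x2).
Proof.
move=> pr_valid m_pop prA; split.
- move=> K1 K2 beta K1_ge1 leK /andP[beta_gt0 _] x1 x2.
  exact: nash_total_protection_le.
- move=> K beta1 beta2 K_ge1 beta1_gt0 leb _ x1 x2.
  exact: nash_total_protection_le.
Qed.
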